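(* Consider the single-element, single-slab space-time SBP scheme with weakly imposed homogeneous Dirichlet boundary conditions: unknowns $\boldsymbol\rho,\boldsymbol g_1,\dots,\boldsymbol g_{n_v}$ satisfying $$\mathsf D_t\boldsymbol\rho+\mathsf D_x\langle v\boldsymbol g\rangle=-\sigma_a\boldsymbol\rho+\mathsf{SAT}^{\rho}_L+\mathsf{SAT}^{\rho}_R-\mathsf H_t^{-1}\mathsf t_B\mathsf t_B^\top(\boldsymbol\rho-\boldsymbol\rho(0)),$$ $$\mathsf D_t\boldsymbol g_k+\tfrac{v_k}{\varepsilon}\mathsf D_x\boldsymbol g_k-\tfrac1\varepsilon\langle v\mathsf D_x\boldsymbol g\rangle+\tfrac{v_k}{\varepsilon^2}\mathsf D_x\boldsymbol\rho=-\Big(\tfrac{\sigma_s}{\varepsilon^2}+\sigma_a\Big)\boldsymbol g_k+\mathsf{SAT}^{g_k}_{LR}-\langle\mathsf{SAT}^{g}_{LR}\rangle-\mathsf H_t^{-1}\mathsf t_B\mathsf t_B^\top(\boldsymbol g_k-\boldsymbol g_k(0)),$$ $k=1,\dots,n_v$, where $\mathsf{SAT}^\rho_L=-\tau_\rho\mathsf H_x^{-1}\mathsf t_L\mathsf t_L^\top\langle v^+(\boldsymbol\rho+\varepsilon\boldsymbol g)\rangle$, $\mathsf{SAT}^\rho_R=\tau_\rho\mathsf H_x^{-1}\mathsf t_R\mathsf t_R^\top\langle v^-(\boldsymbol\rho+\varepsilon\boldsymbol g)\rangle$, and $\mathsf{SAT}^{g_k}_{LR}=-\tau_g v_k\mathsf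 H_x^{-1}\mathsf t_L\mathsf t_L^\top(\boldsymbol\rho+\varepsilon\boldsymbol g_k)$ if $v_k>0$, $\mathsf{SAT}^{g_k}_{LR}=\tau_g v_k\mathsf H_x^{-1}\mathsf t_R\mathsf t_R^\top(\boldsymbol\rho+\varepsilon\boldsymbol g_k)$ if $v_k<0$ (and $0$ if $v_k=0$), with initial data satisfying $\langle\boldsymbol g(0)\rangle=0$. If $\tau_\rho=\frac1{2\varepsilon}$, $\tau_g=\frac1{2\varepsilon^2}$ and the velocity quadrature is symmetric, then the scheme is stable: every solution satisfies $$\tfrac12\boldsymbol\rho^\top(\bar{\boldsymbol t}_T\bar{\boldsymbol t}_T^\top\otimes\bar{\mathsf H}_x)\boldsymbol\rho+\tfrac{\varepsilon^2}2\langle\boldsymbol g^\top(\bar{\boldsymbol t}_T\bar{\boldsymbol t}_T^\top\otimes\bar{\mathsf H}_x)\boldsymbol g\rangle\le\tfrac12\boldsymbol\rho(0)^\top(\bar{\boldsymbol t}_B\bar{\boldsymbol t}_B^\top\otimes\bar{\mathsf H}_x)\boldsymbol\rho(0)+\tfrac{\varepsilon^2}2\langle\boldsymbol g(0)^\top(\bar{\boldsymbol t}_B\bar{\boldsymbol t}_B^\top\otimes\bar{\mathsf H}_x)\boldsymbol g(0)\rangle.$$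
   Context: SBP operators: $\bar{\mathsf D}=\bar{\mathsf H}^{-1}\bar{\mathsf Q}$ on nodes $x_0<\dots<x_n$ is a degree-$p$ SBP approximation of $d/dx$ if $\bar{\mathsf D}\boldsymbol x^k=k\boldsymbol x^{k-1}$ for $0\le k\le p$, $\bar{\mathsf H}$ is diagonal symmetric positive definite, and $\bar{\mathsf Q}+\bar{\mathsf Q}^\top=\bar{\boldsymbol t}_R\bar{\boldsymbol t}_R^\top-\bar{\boldsymbol t}_L\bar{\boldsymbol t}_L^\top=\mathrm{diag}(-1,0,\dots,0,1)$, with $\bar{\boldsymbol t}_L,\bar{\boldsymbol t}_R$ the first/last unit vectors. $\bar{\mathsf D}_x=\bar{\mathsf H}_x^{-1}\bar{\mathsf Q}_x$ on $n_x+1$ spatial nodes; $\bar{\mathsf D}_t=\bar{\mathsf H}_t^{-1}\bar{\mathsf Q}_t$ on $n_t+1$ temporal nodes with first/last unit vectors $\bar{\boldsymbol t}_B,\bar{\boldsymbol t}_T$. With identities $\mathsf I_{n_x},\mathsf I_{n_t}$ of sizes $n_x+1,n_t+1$: $\mathsf D_t=\bar{\mathsf D}_t\otimes\mathsf I_{n_x}$, $\mathsf D_x=\mathsf I_{n_t}\otimes\bar{\mathsf D}_x$, $\mathsf H_t=\bar{\mathsf H}_t\otimes\mathsf I_{n_x}$, $\mathsf H_x=\mathsf I_{n_t}\otimes\bar{\mathsf H}_x$, $\mathsf t_{R/L}=\mathsf I_{n_t}\otimes\bar{\boldsymbol t}_{R/L}$, $\mathsf t_B=\bar{\boldsymbol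 t}_B\otimes\mathsf I_{n_x}$. Velocity nodes $v_k$, weights $\omega_k>0$, $k=1,\dots,n_v$, with $\sum\omega_k=1$, $\sum\omega_kv_k=0$; $v^+=\max(v,0)$, $v^-=\min(v,0)$; $\langle\boldsymbol a\rangle=\sum_k\omega_k\boldsymbol a_k$, e.g. $\langle v^+(\boldsymbol\rho+\varepsilon\boldsymbol g)\rangle=\sum_k\omega_kv_k^+(\boldsymbol\rho+\varepsilon\boldsymbol g_k)$. The quadrature is symmetric if $\omega_k=\omega_{k'}$ and $v_k=-v_{k'}$ whenever $k+k'=n_v+1$. Parameters $\varepsilon>0$, $\sigma_s>0$, $\sigma_a\ge0$; $\boldsymbol\rho(0),\boldsymbol g_k(0)$ given initial-data vectors. *)

From HB Require Import structures.
From mathcomp Require Import all_boot all_order all_algebra.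
From mathcomp Require Export mxtens.
Set Implicit Arguments. Unset Strict Implicit. Unset Printing Implicit Defensive.
Import Order.TTheory GRing.Theory Num.Theory.
Local Open Scope ring_scope.

Section Defs.
Variable R : realFieldType.

Definition tfirst (n : nat) : 'cV[R]_n.+1 := delta_mx 0 0.
Definition tlast (n : nat) : 'cV[R]_n.+1 := delta_mx ord_max 0.

Definition nodepow (n : nat) (x : 'I_n.+1 -> R) (k : nat) : 'cV[R]_n.+1 :=
  \col_i (x i ^+ k).
Definition dnodepow (n : nat) (x : 'I_n.+1 -> R) (k : nat) : 'cV[R]_n.+1 :=
  \col_i (k%:R * x i ^+ k.-1).

(* D = H^{-1} Q is a degree-p SBP approximation of d/dx on the strictly
   increasing nodes x_0 < ... < x_n *)
Definition SBP (n p : nat) (x : 'I_n.+1 -> R) (H Q : 'M[R]_n.+1) : Prop :=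
  [/\ (forall i j : 'I_n.+1, (i < j)%N -> x i < x j),
      (forall k, (k <= p)%N -> (invmx H *m Q) *m nodepow x k = dnodepow x k),
      is_diag_mx H,
      (forall i, 0 < H i i) &
      Q + Q^T = tlast n *m (tlast n)^T - tfirst n *m (tfirst n)^T].

Definition quadrature (nv : nat) (v w : 'I_nv -> R) : Prop :=
  [/\ (forall k, 0 < w k), \sum_k w k = 1 & \sum_k w k * v k = 0].

(* symmetric quadrature: with 1-based indices, k + k' = nv + 1 means k' is the
   reversed index of k *)
Definition symmetric_quadrature (nv : nat) (v w : 'I_nv -> R) : Prop :=
  forall k, w (rev_ord k) = w k /\ v (rev_ord k) = - v k.

Definition avg (nv N : nat) (w : 'I_nv -> R) (a : 'I_nv -> 'cV[R]_N) : 'cV[R]_N :=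
  \sum_k w k *: a k.
Definition avgR (nv : nat) (w : 'I_nv -> R) (a : 'I_nv -> R) : R :=
  \sum_k w k * a k.

Definition vplus (a : R) : R := Num.max a 0.
Definition vminus (a : R) : R := Num.min a 0.

Definition qform (N : nat) (A : 'M[R]_N) (u : 'cV[R]_N) : R := (u^T *m A *m u) 0 0.

End Defs.
Arguments tfirst {R} n.
Arguments tlast {R} n.

(* Energy method.  Test the rho-equation with rho^T H and the g_k-equation with
   eps^2 g_k^T H, where H = H_t (x) H_x, and average over the velocities.  By the SBP
   property in time, u^T H D_t u is half the difference of the H_x-energies of u on the
   top and bottom time slices, and the time SAT bounds the bottom energy by that of the
   initial data.  Averaging the g-equations shows that <g> solves a damped homogeneous
   problem with zero initial data, so <g> = 0; this kills the coupling terms <v D_x g>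
   and <SAT^g>.  Finally, by the SBP property in space and for tau_rho = 1/(2 eps),
   tau_g = 1/(2 eps^2), the advection and SAT terms of velocity v_k add up to
   -|v_k|/(2 eps) times the outflow-boundary energy of rho + eps g_k. *)

From HB Require Import structures.
From mathcomp Require Import all_boot all_order all_algebra.
From mathcomp Require Import mxtens.
From mathcomp Require Import ring lra.
Import Order.TTheory GRing.Theory Num.Theory.
Local Open Scope ring_scope.
Set Implicit Arguments. Unset Strict Implicit. Unset Printing Implicit Defensive.

Section BilinearForm.
Variables (R : realFieldType) (N : nat).
Implicit Types (A B : 'M[R]_N) (u x y z : 'cV[R]_N).

Definition bform A u z : R := (u^T *m A *m z) 0 0.

Lemma bformDr A u y z : bform A u (y + z) = bform A u y + bform A u z.
Proof. by rewrite /bform mulmxDr mxE. Qed.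

Lemma bformZr A u a z : bform A u (a *: z) = a * bform A u z.
Proof. by rewrite /bform -scalemxAr mxE. Qed.

Lemma bformNr A u z : bform A u (- z) = - bform A u z.
Proof. by rewrite -scaleN1r bformZr mulN1r. Qed.

Lemma bformBr A u y z : bform A u (y - z) = bform A u y - bform A u z.
Proof. by rewrite bformDr bformNr. Qed.

Lemma bform0r A u : bform A u 0 = 0.
Proof. by rewrite -(scale0r 0) bformZr mul0r. Qed.

Lemma bform_sumr (I : Type) (r : seq I) (P : pred I) (c : I -> R) (f : I -> 'cV[R]_N) A u :
  bform A u (\sum_(k <- r | P k) c k *: f k) = \sum_(k <- r | P k) c k * bform A u (f k).
Proof.
apply: (big_rec2 (fun a b => bform A u a = b)) => [|k a b _ IH].
  exact: bform0r.
by rewrite bformDr bformZr IH.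
Qed.

Lemma bform_trmx A u z : bform A^T u z = bform A z u.
Proof.
rewrite /bform.
have -> : (z^T *m A *m u) 0 0 = (z^T *m A *m u)^T 0 0 by rewrite [in RHS]mxE.
by rewrite !trmx_mul trmxK mulmxA.
Qed.

Lemma bform0l A z : bform A 0 z = 0.
Proof. by rewrite -bform_trmx bform0r. Qed.

Lemma bform_sym A u z : A^T = A -> bform A u z = bform A z u.
Proof. by move=> AT; rewrite -bform_trmx AT. Qed.

Lemma bformDl A x y z : bform A (x + y) z = bform A x z + bform A y z.
Proof. by rewrite -bform_trmx bformDr !bform_trmx. Qed.

Lemma bformZl A a u z : bform A (a *: u) z = a * bform A u z.
Proof. by rewrite -bform_trmx bformZr bform_trmx. Qed.

Lemma bformBl A x y z : bform A (x - y) z = bform A x z - bform A y z.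
Proof. by rewrite -bform_trmx bformBr !bform_trmx. Qed.

Lemma bform_suml (I : Type) (r : seq I) (P : pred I) (c : I -> R) (f : I -> 'cV[R]_N) A z :
  bform A (\sum_(k <- r | P k) c k *: f k) z = \sum_(k <- r | P k) c k * bform A (f k) z.
Proof. by rewrite -bform_trmx bform_sumr; apply: eq_bigr => k _; rewrite bform_trmx. Qed.

Lemma bformDm A B u z : bform (A + B) u z = bform A u z + bform B u z.
Proof. by rewrite /bform mulmxDr mulmxDl mxE. Qed.

Lemma bformBm A B u z : bform (A - B) u z = bform A u z - bform B u z.
Proof. by rewrite /bform mulmxBr mulmxBl !mxE. Qed.

Lemma bform_mulmxr A B u z : bform A u (B *m z) = bform (A *m B) u z.
Proof. by rewrite /bform !mulmxA. Qed.

Lemma bform_symmetric_part A u : bform A u u = bform (A + A^T) u u / 2.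
Proof. by rewrite bformDm bform_trmx; field. Qed.

Lemma bform_diag A u z : is_diag_mx A -> bform A u z = \sum_i u i 0 * A i i * z i 0.
Proof.
move=> /is_diag_mxP A_diag; rewrite /bform mxE; apply: eq_bigr => j _.
rewrite mxE (bigD1 j) //= big1 ?addr0 ?mxE // => i /negbTE nij.
by rewrite A_diag ?mulr0 // val_eqE nij.
Qed.

End BilinearForm.

Definition nonneg_diag (R : realFieldType) (N : nat) (A : 'M[R]_N) : Prop :=
  is_diag_mx A /\ forall i, 0 <= A i i.

Section DiagonalForms.
Variables (R : realFieldType) (N : nat).
Implicit Types (A : 'M[R]_N) (u x y : 'cV[R]_N).

Lemma is_diag_mx_trmx A : is_diag_mx A -> A^T = A.
Proof. by move=> /diag_mxP[d ->]; rewrite tr_diag_mx. Qed.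

Lemma qform_ge0 A u : nonneg_diag A -> 0 <= bform A u u.
Proof.
move=> [A_diag A_ge0]; rewrite bform_diag //; apply: sumr_ge0 => i _.
by rewrite mulrAC -expr2 mulr_ge0 ?sqr_ge0.
Qed.

Lemma qform_eq0 A u :
  is_diag_mx A -> (forall i, 0 < A i i) -> bform A u u = 0 -> u = 0.
Proof.
move=> A_diag A_gt0; rewrite bform_diag // => /eqP.
rewrite psumr_eq0 => [/allP u0|i _]; last by rewrite mulrAC -expr2 mulr_ge0 ?sqr_ge0 ?ltW.
apply/matrixP => i j; rewrite (ord1 j) mxE.
have /u0 : i \in index_enum 'I_N by rewrite mem_index_enum.
by rewrite /= mulrAC -expr2 mulf_eq0 sqrf_eq0 (gt_eqF (A_gt0 i)) orbF => /eqP.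
Qed.

Lemma bform_penalty_le A x y :
  nonneg_diag A -> bform A x x / 2 - (bform A x x - bform A x y) <= bform A y y / 2.
Proof.
move=> A_nonneg; have := qform_ge0 (x - y) A_nonneg.
rewrite !(bformBr, bformBl) (bform_sym y x (is_diag_mx_trmx A_nonneg.1)); lra.
Qed.

Lemma diag_gt0_unitmx A : is_diag_mx A -> (forall i, 0 < A i i) -> A \in unitmx.
Proof.
move=> /diag_mxP[d ->] A_gt0; rewrite unitmxE det_diag unitfE prodf_seq_neq0.
apply/allP => i _; have := A_gt0 i; rewrite mxE eqxx mulr1n => d_gt0.
by rewrite /= gt_eqF.
Qed.

End DiagonalForms.

Section Kronecker.
Variable R : realFieldType.

Lemma tensmxDl m n p q (A B : 'M[R]_(m, n)) (C : 'M[R]_(p, q)) :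
  (A + B) *t C = A *t C + B *t C.
Proof. by apply/matrixP => k l; rewrite !mxE mulrDl. Qed.

Lemma tensmxBl m n p q (A B : 'M[R]_(m, n)) (C : 'M[R]_(p, q)) :
  (A - B) *t C = A *t C - B *t C.
Proof. by apply/matrixP => k l; rewrite !mxE mulrBl. Qed.

Lemma tensmxDr m n p q (A : 'M[R]_(m, n)) (B C : 'M[R]_(p, q)) :
  A *t (B + C) = A *t B + A *t C.
Proof. by apply/matrixP => k l; rewrite !mxE mulrDr. Qed.

Lemma tensmxBr m n p q (A : 'M[R]_(m, n)) (B C : 'M[R]_(p, q)) :
  A *t (B - C) = A *t B - A *t C.
Proof. by apply/matrixP => k l; rewrite !mxE mulrBr. Qed.

Lemma tensmx_is_diag m n (A : 'M[R]_m) (B : 'M[R]_n) :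
  is_diag_mx A -> is_diag_mx B -> is_diag_mx (A *t B).
Proof.
move=> /is_diag_mxP A_diag /is_diag_mxP B_diag; apply/is_diag_mxP => k l.
case: (mxtens_indexP k) => i j; case: (mxtens_indexP l) => i' j'.
rewrite tensmxE; have [<-|/A_diag->] := eqVneq i i'; last by rewrite mul0r.
have [<-|/B_diag->] := eqVneq j j'; last by rewrite mulr0.
by rewrite eqxx.
Qed.

Lemma tensmx_diag_gt0 m n (A : 'M[R]_m) (B : 'M[R]_n) :
  (forall i, 0 < A i i) -> (forall j, 0 < B j j) -> forall k, 0 < (A *t B) k k.
Proof. by move=> A_gt0 B_gt0 k; case: (mxtens_indexP k) => i j; rewrite tensmxE mulr_gt0. Qed.

Lemma tensmx_nonneg_diag m n (A : 'M[R]_m) (B : 'M[R]_n) :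
  nonneg_diag A -> nonneg_diag B -> nonneg_diag (A *t B).
Proof.
move=> [A_diag A_ge0] [B_diag B_ge0]; split; first exact: tensmx_is_diag.
by move=> k; case: (mxtens_indexP k) => i j; rewrite tensmxE mulr_ge0.
Qed.

Lemma unit_outer_nonneg_diag n (i : 'I_n) :
  nonneg_diag ((delta_mx i 0 : 'cV[R]_n) *m (delta_mx i 0)^T).
Proof.
rewrite trmx_delta mul_delta_mx; split=> [|a]; last by rewrite mxE ler0n.
apply/is_diag_mxP => a b ab; rewrite mxE.
by case: (a =P i) => [ea|]; case: (b =P i) => [eb|] //=; rewrite ea eb eqxx in ab.
Qed.

Lemma tensmx_inv_outer_l m n (A : 'M[R]_m.+1) (B : 'M[R]_n.+1) (t : 'cV[R]_m.+1) :
  A \in unitmx ->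
  (A *t B) *m (invmx (A *t 1%:M) *m (t *t 1%:M) *m (t *t 1%:M)^T) = (t *m t^T) *t B.
Proof.
move=> A_unit; have -> : A *t B = (1%:M *t B) *m (A *t 1%:M).
  by rewrite tensmx_mul mul1mx mulmx1.
rewrite !mulmxA mulmxK ?tensmx_unit ?unitmx1 //.
by rewrite trmx_tens trmx1 !tensmx_mul mul1mx !mulmx1.
Qed.

Lemma tensmx_inv_outer_r m n (A : 'M[R]_m.+1) (B : 'M[R]_n.+1) (t : 'cV[R]_n.+1) :
  B \in unitmx ->
  (A *t B) *m (invmx (1%:M *t B) *m (1%:M *t t) *m (1%:M *t t)^T) = A *t (t *m t^T).
Proof.
move=> B_unit; have -> : A *t B = (A *t 1%:M) *m (1%:M *t B).
  by rewrite tensmx_mul mul1mx mulmx1.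
rewrite !mulmxA mulmxK ?tensmx_unit ?unitmx1 //.
by rewrite trmx_tens trmx1 !tensmx_mul mul1mx !mulmx1.
Qed.

End Kronecker.

Section SBPNorm.
Variables (R : realFieldType) (n p : nat) (x : 'I_n.+1 -> R) (H Q : 'M[R]_n.+1).
Hypothesis sbp : SBP p x H Q.

Lemma SBP_diag : is_diag_mx H.
Proof. by case: sbp. Qed.

Lemma SBP_gt0 : forall i, 0 < H i i.
Proof. by case: sbp. Qed.

Lemma SBP_trmx : H^T = H.
Proof. exact/is_diag_mx_trmx/SBP_diag. Qed.

Lemma SBP_unitmx : H \in unitmx.
Proof. exact: diag_gt0_unitmx SBP_diag SBP_gt0. Qed.

Lemma SBP_nonneg_diag : nonneg_diag H.
Proof. by split=> [|i]; [exact: SBP_diag | exact/ltW/SBP_gt0]. Qed.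

Lemma SBP_boundary : Q + Q^T = tlast n *m (tlast n)^T - tfirst n *m (tfirst n)^T.
Proof. by case: sbp. Qed.

End SBPNorm.

Section Average.
Variables (R : realFieldType) (nv N : nat) (w : 'I_nv -> R).
Implicit Types (f h : 'I_nv -> 'cV[R]_N) (x : 'cV[R]_N).

Lemma avgD f h : avg w (fun k => f k + h k) = avg w f + avg w h.
Proof. by rewrite /avg -big_split; apply: eq_bigr => k _; rewrite scalerDr. Qed.

Lemma avgN f : avg w (fun k => - f k) = - avg w f.
Proof. by rewrite /avg -sumrN; apply: eq_bigr => k _; rewrite scalerN. Qed.

Lemma avgB f h : avg w (fun k => f k - h k) = avg w f - avg w h.
Proof. by rewrite avgD avgN. Qed.

Lemma avgZ (c : R) f : avg w (fun k => c *: f k) = c *: avg w f.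
Proof. by rewrite /avg scaler_sumr; apply: eq_bigr => k _; rewrite !scalerA mulrC. Qed.

Lemma avgZl (a : 'I_nv -> R) (c : R) f :
  avg w (fun k => (a k * c) *: f k) = c *: avg w (fun k => a k *: f k).
Proof. by rewrite -avgZ; apply: eq_bigr => k _; rewrite !scalerA mulrAC mulrA. Qed.

Lemma avg_mulmx m (M : 'M[R]_(m, N)) f : avg w (fun k => M *m f k) = M *m avg w f.
Proof. by rewrite /avg mulmx_sumr; apply: eq_bigr => k _; rewrite scalemxAr. Qed.

Lemma avg_scale (a : 'I_nv -> R) x : avg w (fun k => a k *: x) = avgR w a *: x.
Proof. by rewrite /avg /avgR scaler_suml; apply: eq_bigr => k _; rewrite scalerA. Qed.

Lemma avg_const x : avg w (fun => x) = (\sum_k w k) *: x.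
Proof. by rewrite /avg scaler_suml. Qed.

Lemma bform_avgr (A : 'M[R]_N) x f : bform A x (avg w f) = avgR w (fun k => bform A x (f k)).
Proof. exact: bform_sumr. Qed.

Lemma bform_avgl (A : 'M[R]_N) f x : bform A (avg w f) x = avgR w (fun k => bform A (f k) x).
Proof. exact: bform_suml. Qed.

Lemma bform_avgZr (A : 'M[R]_N) x (a : 'I_nv -> R) f :
  bform A x (avg w (fun k => a k *: f k)) = avgR w (fun k => a k * bform A x (f k)).
Proof. by rewrite bform_avgr; apply: eq_bigr => k _; rewrite bformZr. Qed.

End Average.

Section AverageR.
Variables (R : realFieldType) (nv : nat) (w : 'I_nv -> R).
Implicit Types (a b : 'I_nv -> R).

Lemma avgRD a b : avgR w (fun k => a k + b k) = avgR w a + avgR w b.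
Proof. by rewrite /avgR -big_split; apply: eq_bigr => k _; rewrite mulrDr. Qed.

Lemma avgRN a : avgR w (fun k => - a k) = - avgR w a.
Proof. by rewrite /avgR -sumrN; apply: eq_bigr => k _; rewrite mulrN. Qed.

Lemma avgRB a b : avgR w (fun k => a k - b k) = avgR w a - avgR w b.
Proof. by rewrite /avgR -sumrB; apply: eq_bigr => k _; rewrite mulrBr. Qed.

Lemma avgRZ (c : R) a : avgR w (fun k => c * a k) = c * avgR w a.
Proof. by rewrite /avgR mulr_sumr; apply: eq_bigr => k _; rewrite mulrCA. Qed.

Lemma eq_avgR a b : (forall k, a k = b k) -> avgR w a = avgR w b.
Proof. by move=> ab; apply: eq_bigr => k _; rewrite ab. Qed.

End AverageR.

Section Scheme.
Variables (R : realFieldType) (nx nt px pt : nat) (xs : 'I_nx.+1 -> R) (ts : 'I_nt.+1 -> R).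
Variables (Hx Qx : 'M[R]_nx.+1) (Ht Qt : 'M[R]_nt.+1).
Variables (nv : nat) (v w : 'I_nv -> R) (eps sigs siga taurho taug : R).
Variables (rho rho0 : 'cV[R]_(nt.+1 * nx.+1)) (g g0 : 'I_nv -> 'cV[R]_(nt.+1 * nx.+1)).
Hypotheses (SBPx : SBP px xs Hx Qx) (SBPt : SBP pt ts Ht Qt) (quad : quadrature v w).
Hypotheses (eps_gt0 : 0 < eps) (sigs_gt0 : 0 < sigs) (siga_ge0 : 0 <= siga).

Let Ix : 'M[R]_nx.+1 := 1%:M.
Let It : 'M[R]_nt.+1 := 1%:M.
Let Dt := (invmx Ht *m Qt) *t Ix.
Let Dx := It *t (invmx Hx *m Qx).
Let Htf := Ht *t Ix.
Let Hxf := It *t Hx.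
Let tL := It *t tfirst nx.
Let tR := It *t tlast nx.
Let tB := tfirst nt *t Ix.
Let SATrhoL := - taurho *: (invmx Hxf *m tL *m tL^T *m
                  avg w (fun k => vplus (v k) *: (rho + eps *: g k))).
Let SATrhoR := taurho *: (invmx Hxf *m tR *m tR^T *m
                  avg w (fun k => vminus (v k) *: (rho + eps *: g k))).
Let SATg := fun k =>
  if 0 < v k then - (taug * v k) *: (invmx Hxf *m tL *m tL^T *m (rho + eps *: g k))
  else if v k < 0 then (taug * v k) *: (invmx Hxf *m tR *m tR^T *m (rho + eps *: g k))
  else 0.

Hypothesis g0_mean0 : avg w g0 = 0.
Hypothesis scheme_rho :
  Dt *m rho + Dx *m avg w (fun k => v k *: g k) =
    - (siga *: rho) + SATrhoL + SATrhoR - invmx Htf *m tB *m tB^T *m (rho - rho0).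
Hypothesis scheme_g : forall k,
  Dt *m g k + (v k / eps) *: (Dx *m g k) - eps^-1 *: avg w (fun j => v j *: (Dx *m g j))
    + (v k / eps ^+ 2) *: (Dx *m rho) =
  - ((sigs / eps ^+ 2 + siga) *: g k) + SATg k - avg w SATg
    - invmx Htf *m tB *m tB^T *m (g k - g0 k).
Hypotheses (taurhoE : taurho = 1 / (2 * eps)) (taugE : taug = 1 / (2 * eps ^+ 2)).

Let WT := (tlast nt *m (tlast nt)^T) *t Hx.
Let WB := (tfirst nt *m (tfirst nt)^T) *t Hx.
Let BL := Ht *t (tfirst nx *m (tfirst nx)^T).
Let BR := Ht *t (tlast nx *m (tlast nx)^T).
Let H := Ht *t Hx.
Let c := sigs / eps ^+ 2 + siga.
Let Ax := Ht *t Qx.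

Lemma H_diag : is_diag_mx H.
Proof. exact: tensmx_is_diag (SBP_diag SBPt) (SBP_diag SBPx). Qed.

Lemma H_gt0 : forall i, 0 < H i i.
Proof. exact: tensmx_diag_gt0 (SBP_gt0 SBPt) (SBP_gt0 SBPx). Qed.

Lemma H_nonneg_diag : nonneg_diag H.
Proof. exact: tensmx_nonneg_diag (SBP_nonneg_diag SBPt) (SBP_nonneg_diag SBPx). Qed.

Lemma WT_nonneg_diag : nonneg_diag WT.
Proof. exact: tensmx_nonneg_diag (unit_outer_nonneg_diag _ _) (SBP_nonneg_diag SBPx). Qed.

Lemma WB_nonneg_diag : nonneg_diag WB.
Proof. exact: tensmx_nonneg_diag (unit_outer_nonneg_diag _ _) (SBP_nonneg_diag SBPx). Qed.

Lemma BL_nonneg_diag : nonneg_diag BL.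
Proof. exact: tensmx_nonneg_diag (SBP_nonneg_diag SBPt) (unit_outer_nonneg_diag _ _). Qed.

Lemma BR_nonneg_diag : nonneg_diag BR.
Proof. exact: tensmx_nonneg_diag (SBP_nonneg_diag SBPt) (unit_outer_nonneg_diag _ _). Qed.

Lemma mulmx_H_Dt : H *m Dt = Qt *t Hx.
Proof. by rewrite tensmx_mul mulKVmx ?(SBP_unitmx SBPt) // mulmx1. Qed.

Lemma mulmx_H_Dx : H *m Dx = Ax.
Proof. by rewrite tensmx_mul mulKVmx ?(SBP_unitmx SBPx) // mulmx1. Qed.

Lemma bform_H_penaltyB x z : bform H x (invmx Htf *m tB *m tB^T *m z) = bform WB x z.
Proof. by rewrite bform_mulmxr tensmx_inv_outer_l // (SBP_unitmx SBPt). Qed.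

Lemma bform_H_penaltyL x z : bform H x (invmx Hxf *m tL *m tL^T *m z) = bform BL x z.
Proof. by rewrite bform_mulmxr tensmx_inv_outer_r // (SBP_unitmx SBPx). Qed.

Lemma bform_H_penaltyR x z : bform H x (invmx Hxf *m tR *m tR^T *m z) = bform BR x z.
Proof. by rewrite bform_mulmxr tensmx_inv_outer_r // (SBP_unitmx SBPx). Qed.

Lemma qform_Dt z : bform H z (Dt *m z) = (bform WT z z - bform WB z z) / 2.
Proof.
rewrite bform_mulmxr mulmx_H_Dt bform_symmetric_part trmx_tens (SBP_trmx SBPx).
by rewrite -tensmxDl (SBP_boundary SBPt) tensmxBl bformBm.
Qed.

Lemma bform_Ax_skew y z : bform Ax y z + bform Ax z y = bform BR y z - bform BL y z.
Proof.
rewrite -[bform _ z y]bform_trmx -bformDm trmx_tens (SBP_trmx SBPt) -tensmxDr.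
by rewrite (SBP_boundary SBPx) tensmxBr bformBm.
Qed.

Lemma qform_Ax z : bform Ax z z = (bform BR z z - bform BL z z) / 2.
Proof. by rewrite -bform_Ax_skew; field. Qed.

Lemma BL_trmx : BL^T = BL. Proof. exact/is_diag_mx_trmx/BL_nonneg_diag.1. Qed.
Lemma BR_trmx : BR^T = BR. Proof. exact/is_diag_mx_trmx/BR_nonneg_diag.1. Qed.

Lemma c_gt0 : 0 < c.
Proof. by rewrite ltr_pwDl // divr_gt0 // exprn_gt0. Qed.

Lemma mean_g_dynamics :
  Dt *m avg w g = - (c *: avg w g) - invmx Htf *m tB *m tB^T *m avg w g.
Proof.
have [_ w_sum1 wv_sum0] := quad.
have : avg w (fun k => Dt *m g k + (v k / eps) *: (Dx *m g k)
          - eps^-1 *: avg w (fun j => v j *: (Dx *m g j)) + (v k / eps ^+ 2) *: (Dx *m rho)) =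
       avg w (fun k => - (c *: g k) + SATg k - avg w SATg
          - invmx Htf *m tB *m tB^T *m (g k - g0 k)).
  by apply: eq_bigr => k _; rewrite scheme_g.
rewrite !(avgD, avgB, avgN) !avg_mulmx !avgZl avgZ avg_scale !avg_const avgB.
rewrite g0_mean0 w_sum1 [avgR w v]wv_sum0 !scale1r scale0r scaler0 addr0 addrK subr0.
by rewrite addrK.
Qed.

Lemma mean_g_eq0 : avg w g = 0.
Proof.
have := congr1 (bform H (avg w g)) mean_g_dynamics.
rewrite qform_Dt bformBr bformNr bformZr bform_H_penaltyB.
move: (avg w g) => G energy.
have WT_ge0 := qform_ge0 G WT_nonneg_diag.
have WB_ge0 := qform_ge0 G WB_nonneg_diag.
have : c * bform H G G <= 0 by move: (c * _) energy => cHG energy; lra.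
rewrite pmulr_rle0 ?c_gt0 // => HG_le0.
apply: qform_eq0 H_diag H_gt0 _.
by apply/le_anti; rewrite HG_le0 qform_ge0 //; exact: H_nonneg_diag.
Qed.

Lemma rho_energy :
  (bform WT rho rho - bform WB rho rho) / 2 + avgR w (fun k => v k * bform Ax rho (g k)) =
  - (siga * bform H rho rho)
  - taurho * avgR w (fun k => vplus (v k) * bform BL rho (rho + eps *: g k))
  + taurho * avgR w (fun k => vminus (v k) * bform BR rho (rho + eps *: g k))
  - (bform WB rho rho - bform WB rho rho0).
Proof.
have := congr1 (bform H rho) scheme_rho.
rewrite !(bformDr, bformBr, bformNr, bformZr) qform_Dt.
rewrite bform_H_penaltyL bform_H_penaltyR bform_H_penaltyB !bform_avgZr bformBr.
by rewrite bform_mulmxr mulmx_H_Dx bform_avgZr => ->; rewrite mulNr.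
Qed.

Lemma g_energy k :
  eps ^+ 2 * (bform WT (g k) (g k) - bform WB (g k) (g k)) / 2
    + eps * v k * bform Ax (g k) (g k) + v k * bform Ax (g k) rho
    - eps * bform H (g k) (avg w (fun j => v j *: (Dx *m g j))) =
  - (eps ^+ 2 * c) * bform H (g k) (g k) + eps ^+ 2 * bform H (g k) (SATg k)
    - eps ^+ 2 * bform H (g k) (avg w SATg)
    - eps ^+ 2 * (bform WB (g k) (g k) - bform WB (g k) (g0 k)).
Proof.
have eps_neq0 : eps != 0 by rewrite gt_eqF.
have := congr1 (fun x => eps ^+ 2 * bform H (g k) x) (scheme_g k).
rewrite /= !(bformDr, bformBr, bformNr, bformZr) qform_Dt bform_H_penaltyB bformBr.
rewrite !bform_mulmxr mulmx_H_Dx => energy.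
by rewrite /c; apply: etrans _ (etrans energy _); field.
Qed.

Lemma sat_energy k :
  - taurho * (vplus (v k) * bform BL rho (rho + eps *: g k))
  + taurho * (vminus (v k) * bform BR rho (rho + eps *: g k))
  + eps ^+ 2 * bform H (g k) (SATg k) =
  (vminus (v k) * bform BR (rho + eps *: g k) (rho + eps *: g k)
   - vplus (v k) * bform BL (rho + eps *: g k) (rho + eps *: g k)) / (2 * eps).
Proof.
have eps_neq0 : eps != 0 by rewrite gt_eqF.
rewrite /SATg /vplus /vminus taurhoE taugE.
have [v_gt0|v_le0] := ltP 0 (v k); last have [v_lt0|v_ge0] := ltP (v k) 0;
  rewrite ?bformZr ?bform_H_penaltyL ?bform_H_penaltyR ?bform0r;
  rewrite !(bformDl, bformDr, bformZl, bformZr);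
  rewrite ?(bform_sym (g k) rho BL_trmx) ?(bform_sym (g k) rho BR_trmx).
- by field.
- by field.
- have -> : v k = 0 by apply/le_anti; rewrite v_le0.
  by field.
Qed.

Lemma advection_energy k :
  v k * (bform Ax rho (g k) + bform Ax (g k) rho) + eps * v k * bform Ax (g k) (g k) =
  v k * (bform BR (rho + eps *: g k) (rho + eps *: g k)
         - bform BL (rho + eps *: g k) (rho + eps *: g k)) / (2 * eps)
  - (bform BR rho rho - bform BL rho rho) / (2 * eps) * v k.
Proof.
have eps_neq0 : eps != 0 by rewrite gt_eqF.
rewrite bform_Ax_skew qform_Ax !(bformDl, bformDr, bformZl, bformZr).
by rewrite (bform_sym (g k) _ BL_trmx) (bform_sym (g k) _ BR_trmx); field.
Qed.

Let dissipation k :=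
  (vplus (v k) * bform BR (rho + eps *: g k) (rho + eps *: g k)
   - vminus (v k) * bform BL (rho + eps *: g k) (rho + eps *: g k)) / (2 * eps).

Lemma dissipation_ge0 k : 0 <= dissipation k.
Proof.
apply: divr_ge0; last by rewrite mulr_ge0 // ltW.
rewrite subr_ge0; apply: (@le_trans _ _ 0).
  by rewrite mulr_le0_ge0 ?ge_min ?lexx ?orbT // (qform_ge0 _ BL_nonneg_diag).
by rewrite mulr_ge0 ?le_max ?lexx ?orbT // (qform_ge0 _ BR_nonneg_diag).
Qed.

(* The last term averages out because the velocities have zero mean. *)
Lemma velocity_balance k :
  eps ^+ 2 / 2 * bform WT (g k) (g k) - v k * bform Ax rho (g k)
  - taurho * (vplus (v k) * bform BL rho (rho + eps *: g k))
  + taurho * (vminus (v k) * bform BR rho (rho + eps *: g k))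
  - (eps ^+ 2 * (bform WB (g k) (g k) / 2 - (bform WB (g k) (g k) - bform WB (g k) (g0 k)))
     - eps ^+ 2 * c * bform H (g k) (g k) - dissipation k) =
  eps * bform H (g k) (avg w (fun j => v j *: (Dx *m g j)))
  - eps ^+ 2 * bform H (g k) (avg w SATg)
  + (bform BR rho rho - bform BL rho rho) / (2 * eps) * v k.
Proof.
have eps_neq0 : eps != 0 by rewrite gt_eqF.
have dissipationE : dissipation k =
    v k * (bform BR (rho + eps *: g k) (rho + eps *: g k)
           - bform BL (rho + eps *: g k) (rho + eps *: g k)) / (2 * eps)
  - (vminus (v k) * bform BR (rho + eps *: g k) (rho + eps *: g k)
     - vplus (v k) * bform BL (rho + eps *: g k) (rho + eps *: g k)) / (2 * eps).
  have : v k = vplus (v k) + vminus (v k) by rewrite addr_max_min addr0.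
  by rewrite /dissipation; move: (vplus _) (vminus _) => p m ->; field.
have := g_energy k; have := sat_energy k; have := advection_energy k.
rewrite dissipationE; lra.
Qed.

Lemma energy_identity :
  1 / 2 * bform WT rho rho + eps ^+ 2 / 2 * avgR w (fun k => bform WT (g k) (g k)) =
  bform WB rho rho / 2 - (bform WB rho rho - bform WB rho rho0) - siga * bform H rho rho
  + avgR w (fun k =>
      eps ^+ 2 * (bform WB (g k) (g k) / 2 - (bform WB (g k) (g k) - bform WB (g k) (g0 k)))
      - eps ^+ 2 * c * bform H (g k) (g k) - dissipation k).
Proof.
have [_ _ wv_sum0] := quad.
have := eq_avgR w velocity_balance.
rewrite !(avgRB, avgRD, avgRN, avgRZ) -!bform_avgl mean_g_eq0 !bform0l.
rewrite [avgR w v]wv_sum0.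
have := rho_energy; lra.
Qed.

Lemma energy_estimate :
  1 / 2 * bform WT rho rho + eps ^+ 2 / 2 * avgR w (fun k => bform WT (g k) (g k)) <=
  1 / 2 * bform WB rho0 rho0 + eps ^+ 2 / 2 * avgR w (fun k => bform WB (g0 k) (g0 k)).
Proof.
have [w_gt0 _ _] := quad.
have rho_penalty := bform_penalty_le rho rho0 WB_nonneg_diag.
have siga_rho_ge0 : 0 <= siga * bform H rho rho.
  by rewrite mulr_ge0 // (qform_ge0 _ H_nonneg_diag).
have g_terms : avgR w (fun k =>
      eps ^+ 2 * (bform WB (g k) (g k) / 2 - (bform WB (g k) (g k) - bform WB (g k) (g0 k)))
      - eps ^+ 2 * c * bform H (g k) (g k) - dissipation k)
    <= eps ^+ 2 / 2 * avgR w (fun k => bform WB (g0 k) (g0 k)).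
  rewrite -avgRZ; apply: ler_sum => k _; apply: ler_wpM2l; first exact: ltW.
  have := bform_penalty_le (g k) (g0 k) WB_nonneg_diag.
  move/(ler_wpM2l (sqr_ge0 eps)) => g_penalty.
  have : 0 <= eps ^+ 2 * c * bform H (g k) (g k).
    by rewrite mulr_ge0 ?(qform_ge0 _ H_nonneg_diag) // mulr_ge0 ?sqr_ge0 ?ltW ?c_gt0.
  have := dissipation_ge0 k; lra.
rewrite energy_identity; lra.
Qed.

End Scheme.

Theorem theorem3p6 (R : realFieldType)
  (nx nt px pt : nat) (xs : 'I_nx.+1 -> R) (ts : 'I_nt.+1 -> R)
  (Hx Qx : 'M[R]_nx.+1) (Ht Qt : 'M[R]_nt.+1)
  (nv : nat) (v w : 'I_nv -> R)
  (eps sigs siga taurho taug : R)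
  (rho rho0 : 'cV[R]_(nt.+1 * nx.+1)) (g g0 : 'I_nv -> 'cV[R]_(nt.+1 * nx.+1)) :
  (0 < nx)%N -> (0 < nt)%N ->
  SBP px xs Hx Qx -> SBP pt ts Ht Qt ->
  quadrature v w ->
  0 < eps -> 0 < sigs -> 0 <= siga ->
  let Ix : 'M[R]_nx.+1 := 1%:M in
  let It : 'M[R]_nt.+1 := 1%:M in
  let Dt := (invmx Ht *m Qt) *t Ix in
  let Dx := It *t (invmx Hx *m Qx) in
  let Htf := Ht *t Ix in
  let Hxf := It *t Hx in
  let tL := It *t tfirst nx in
  let tR := It *t tlast nx in
  let tB := tfirst nt *t Ix in
  let SATrhoL := - taurho *: (invmx Hxf *m tL *m tL^T *m
                    avg w (fun k => vplus (v k) *: (rho + eps *: g k))) in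
  let SATrhoR := taurho *: (invmx Hxf *m tR *m tR^T *m
                    avg w (fun k => vminus (v k) *: (rho + eps *: g k))) in
  let SATg := fun k =>
    if 0 < v k then - (taug * v k) *: (invmx Hxf *m tL *m tL^T *m (rho + eps *: g k))
    else if v k < 0 then (taug * v k) *: (invmx Hxf *m tR *m tR^T *m (rho + eps *: g k))
    else 0 in
  (* initial data *)
  avg w g0 = 0 ->
  (* the scheme *)
  Dt *m rho + Dx *m avg w (fun k => v k *: g k) =
    - (siga *: rho) + SATrhoL + SATrhoR - invmx Htf *m tB *m tB^T *m (rho - rho0) ->
  (forall k, Dt *m g k + (v k / eps) *: (Dx *m g k)
               - eps^-1 *: avg w (fun j => v j *: (Dx *m g j))
               + (v k / eps ^+ 2) *: (Dx *m rho) =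
             - ((sigs / eps ^+ 2 + siga) *: g k) + SATg k - avg w SATg
               - invmx Htf *m tB *m tB^T *m (g k - g0 k)) ->
  (* parameters *)
  taurho = 1 / (2 * eps) -> taug = 1 / (2 * eps ^+ 2) ->
  symmetric_quadrature v w ->
  let WT := (tlast nt *m (tlast nt)^T) *t Hx in
  let WB := (tfirst nt *m (tfirst nt)^T) *t Hx in
  1 / 2 * qform WT rho + eps ^+ 2 / 2 * avgR w (fun k => qform WT (g k)) <=
  1 / 2 * qform WB rho0 + eps ^+ 2 / 2 * avgR w (fun k => qform WB (g0 k)).
Proof.
move=> _ _ SBPx SBPt quad eps_gt0 sigs_gt0 siga_ge0 Ix It Dt Dx Htf Hxf tL tR tB
  SATrhoL SATrhoR SATg g0_mean0 scheme_rho scheme_g taurhoE taugE _.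
exact: (energy_estimate SBPx SBPt quad eps_gt0 sigs_gt0 siga_ge0
  g0_mean0 scheme_rho scheme_g taurhoE taugE).
Qed.
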